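(* Let $C=\{c_1,\dots,c_m\}\subset\Delta_d$ be a finite nonempty set and let $v\in\Delta_d$ with $v\in\mathrm{Cone}(C)$. Then $\max_{c\in C}v^\top c\ge\frac1d$.
   Context: $\Delta_d=\{x\in\mathbb{R}^d_{\ge 0}:\sum_i x^i=1\}$; $\mathrm{Cone}(C)$ is the set of nonnegative linear combinations of elements of $C$. *)

From mathcomp Require Import all_boot all_order all_algebra.
Set Implicit Arguments. Unset Strict Implicit. Unset Printing Implicit Defensive.
Import Order.TTheory GRing.Theory Num.Theory.
Local Open Scope ring_scope.

Definition simplex (R : realFieldType) (d : nat) (x : 'rV[R]_d) : Prop :=
  (forall i : 'I_d, 0 <= x 0 i) /\ \sum_(i < d) x 0 i = 1.

Definition dotv (R : realFieldType) (d : nat) (x y : 'rV[R]_d) : R :=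
  \sum_(i < d) x 0 i * y 0 i.

Definition in_cone (R : realFieldType) (d : nat) (C : seq 'rV[R]_d) (v : 'rV[R]_d) : Prop :=
  exists lam : 'rV[R]_d -> R,
    (forall c, c \in C -> 0 <= lam c) /\ v = \sum_(c <- undup C) lam c *: c.

From mathcomp Require Import all_boot all_order all_algebra.
From mathcomp Require Import ring lra.
Set Implicit Arguments.
Unset Strict Implicit.
Unset Printing Implicit Defensive.

Import Order.TTheory GRing.Theory Num.Theory.
Local Open Scope ring_scope.

(* Write v = \sum_c w_c c with w >= 0.  Every c has coordinate sum 1, so the
   weights w_c also sum to 1, and v^T v = \sum_c w_c v^T c is a convex
   combination of the v^T c, hence at most their maximum.  On the other hand
   Cauchy-Schwarz against the all-ones vector gives 1 = (\sum_i v_i)^2 <= d v^T v. *)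

Section WeightedMean.
Variables (R : realFieldType) (I : eqType).

Lemma seq_arg_max (s : seq I) (f : I -> R) :
  s != [::] -> exists2 i, i \in s & forall j, j \in s -> f j <= f i.
Proof.
elim: s => [//|a [|b s] IH] _.
  by exists a; rewrite ?inE // => j; rewrite inE => /eqP ->.
have [i i_s i_max] := IH isT.
have [fa_le | fi_lt] := leP (f a) (f i).
  exists i; first by rewrite inE i_s orbT.
  by move=> j; rewrite inE => /orP [/eqP -> //|]; apply: i_max.
exists a; first by rewrite inE eqxx.
by move=> j; rewrite inE => /orP [/eqP -> //|/i_max/le_trans/(_ (ltW fi_lt))].
Qed.

Lemma weighted_mean_le_some (s : seq I) (w f : I -> R) :
  (forall i, i \in s -> 0 <= w i) -> \sum_(i <- s) w i = 1 ->
  exists2 i, i \in s & \sum_(j <- s) w j * f j <= f i.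
Proof.
move=> w_ge0 w_sum1.
have s_neq0 : s != [::].
  by apply: contra_eq_neq w_sum1 => ->; rewrite big_nil eq_sym oner_neq0.
have [i i_s i_max] := seq_arg_max f s_neq0.
exists i => //; rewrite -[leRHS]mul1r -w_sum1 mulr_suml !big_seq.
by apply: ler_sum => j j_s; rewrite ler_wpM2l ?w_ge0 ?i_max.
Qed.

End WeightedMean.

Section DotProduct.
Variables (R : realFieldType) (d : nat).
Implicit Types (x y : 'rV[R]_d).

Lemma dotvC x y : dotv x y = dotv y x.
Proof. by apply: eq_bigr => i _; rewrite mulrC. Qed.

Lemma dotv_suml (I : eqType) (s : seq I) (w : I -> R) (c : I -> 'rV[R]_d) y :
  dotv (\sum_(i <- s) w i *: c i) y = \sum_(i <- s) w i * dotv (c i) y.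
Proof.
rewrite /dotv; under eq_bigr => k _ do rewrite summxE mulr_suml.
rewrite exchange_big /=; apply: eq_bigr => i _.
by rewrite mulr_sumr; apply: eq_bigr => k _; rewrite mxE mulrA.
Qed.

Lemma sum_coord_suml (I : eqType) (s : seq I) (w : I -> R) (c : I -> 'rV[R]_d) :
  \sum_(k < d) (\sum_(i <- s) w i *: c i) 0 k = \sum_(i <- s) w i * \sum_(k < d) c i 0 k.
Proof.
under eq_bigr => k _ do rewrite summxE.
rewrite exchange_big /=; apply: eq_bigr => i _.
by rewrite mulr_sumr; apply: eq_bigr => k _; rewrite mxE.
Qed.

(* Expand 0 <= \sum_(k, l) (x_k - x_l)^2. *)
Lemma sqr_sum_coord_le x : (\sum_(k < d) x 0 k) ^+ 2 <= d%:R * dotv x x.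
Proof.
set S := \sum_(k < d) x 0 k.
have sum_sqr : \sum_(k < d) x 0 k ^+ 2 = dotv x x.
  by apply: eq_bigr => k _; rewrite expr2.
have row_sum k : \sum_(l < d) (x 0 k - x 0 l) ^+ 2 =
    d%:R * x 0 k ^+ 2 + dotv x x - 2 * x 0 k * S.
  under eq_bigr => l _ do rewrite sqrrB -mulr_natr -mulrA.
  rewrite !big_split sumrN sumr_const card_ord -!mulr_sumr -mulr_suml sum_sqr /=.
  by rewrite -/S mulr_natl; ring.
have : 0 <= \sum_(k < d) \sum_(l < d) (x 0 k - x 0 l) ^+ 2.
  by apply: sumr_ge0 => k _; apply: sumr_ge0 => l _; apply: sqr_ge0.
rewrite (eq_bigr _ (fun k _ => row_sum k)) sumrB big_split sumr_const card_ord /=.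
rewrite -mulr_sumr sum_sqr -mulr_suml -mulr_sumr -/S -mulr_natl expr2; lra.
Qed.

Lemma simplex_dotv_self_ge x : simplex x -> 1 / d%:R <= dotv x x.
Proof.
move=> x_simplex; have [_ x_sum1] := x_simplex.
have d_gt0 : 0 < d%:R :> R.
  case: d x x_sum1 {x_simplex} => [|n] x; rewrite ?ltr0Sn // big_ord0.
  by move=> /eqP; rewrite eq_sym oner_eq0.
by rewrite ler_pdivrMr // mulrC; apply: le_trans (sqr_sum_coord_le x); rewrite x_sum1 expr1n.
Qed.

End DotProduct.

Theorem lemma1 (R : realFieldType) (d : nat) (C : seq 'rV[R]_d) (v : 'rV[R]_d) :
  C != [::] ->
  (forall c, c \in C -> simplex c) ->
  simplex v ->
  in_cone C v ->
  exists2 c, c \in C & dotv v c >= 1 / d%:R.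
Proof.
move=> _ C_simplex v_simplex [w [w_ge0 vE]].
have w_sum1 : \sum_(c <- undup C) w c = 1.
  have [_ <-] := v_simplex; rewrite vE sum_coord_suml big_seq [RHS]big_seq.
  apply: eq_bigr => c; rewrite mem_undup => /C_simplex [_ ->].
  by rewrite mulr1.
have [|c cC dot_le] := weighted_mean_le_some (fun c => dotv c v) _ w_sum1.
  by move=> c; rewrite mem_undup; apply: w_ge0.
exists c; first by rewrite -mem_undup.
rewrite dotvC; apply: le_trans (simplex_dotv_self_ge v_simplex) _.
by rewrite {1}vE dotv_suml.
Qed.
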